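(* Let $\mathcal{H}$ be a hypertree and $u,v$ two vertices of it. Then $uv$ is an edge of some host tree of $\mathcal{H}$ if and only if $u$ and $v$ lie in different connected components of the 2-section of $\overline{\mathcal{H}_{uv}}$.
   Context: A hypergraph $\mathcal{H}$ has a finite vertex set $V(\mathcal{H})$ and a finite family of nonempty subsets (edges). A host tree is a tree on $V(\mathcal{H})$ in which every edge induces a connected subgraph; a hypertree is a hypergraph with a host tree. For $A\subseteq V(\mathcal{H})$, $\overline{\mathcal{H}_A}$ is the hypergraph on $V(\mathcal{H})$ whose edges are the edges of $\mathcal{H}$ not containing $A$; $\overline{\mathcal{H}_{uv}}=\overline{\mathcal{H}_{\{u,v\}}}$. The 2-section of a hypergraph is the graph on its vertex set in which two distinct vertices are adjacent iff some edge contains both. *)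

From mathcomp Require Import all_boot.
Set Implicit Arguments. Unset Strict Implicit. Unset Printing Implicit Defensive.

(* A hypergraph on the finite vertex type V: a finite family E of nonempty
   vertex subsets (the nonemptiness is a hypothesis of the theorem). *)

Definition simple_graph (V : finType) (T : rel V) : Prop :=
  symmetric T /\ irreflexive T.

Definition acyclic (V : finType) (T : rel V) : Prop :=
  forall c : seq V, 3 <= size c -> uniq c -> ~~ cycle T c.

Definition graph_connected (V : finType) (T : rel V) : Prop :=
  forall x y : V, connect T x y.

Definition is_tree (V : finType) (T : rel V) : Prop :=
  [/\ simple_graph T, graph_connected T & acyclic T].

Definition induced (V : finType) (T : rel V) (e : {set V}) : rel V :=
  [rel a b | [&& a \in e, b \in e & T a b]].

Definition induces_connected (V : finType) (T : rel V) (e : {set V}) : Prop :=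
  forall x y, x \in e -> y \in e -> connect (induced T e) x y.

Definition host_tree (V : finType) (E : {set {set V}}) (T : rel V) : Prop :=
  is_tree T /\ forall e, e \in E -> induces_connected T e.

Definition hypertree (V : finType) (E : {set {set V}}) : Prop :=
  exists T : rel V, host_tree E T.

(* \overline{H_A}: the edges of H not containing A (same vertex set V). *)
Definition Hbar (V : finType) (E : {set {set V}}) (A : {set V}) : {set {set V}} :=
  [set e in E | ~~ (A \subset e)].

Definition two_section (V : finType) (E : {set {set V}}) : rel V :=
  [rel a b | (a != b) && [exists e in E, (a \in e) && (b \in e)]].

From mathcomp Require Import all_boot.
Set Implicit Arguments. Unset Strict Implicit. Unset Printing Implicit Defensive.

(* If uv is an edge of a host tree T, it is a bridge of T; every edge of H
   not containing both u and v induces a subtree of T that avoids uv, so the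
   2-section of that subhypergraph only joins vertices on the same side of uv.
   Conversely, if u and v lie in different components of that 2-section, walk
   along the T-path from u to v and let ab be its first edge leaving the
   component of u.  Exchanging ab for uv gives a tree.  An edge of H containing
   u and v stays connected, its a-side and b-side now being joined through uv;
   any other edge lies inside one component of the 2-section, so it does not
   contain both a and b and its subtree never used ab. *)

Section EdgeSurgery.
Variable V : finType.
Implicit Types (T : rel V) (e : {set V}).

Definition pair_eq (x y s t : V) : bool :=
  ((s == x) && (t == y)) || ((s == y) && (t == x)).

Definition del_edge T x y : rel V := [rel s t | T s t && ~~ pair_eq x y s t].

Definition add_edge T x y : rel V := [rel s t | T s t || pair_eq x y s t].

Lemma pair_eqC x y s t : pair_eq x y s t = pair_eq y x s t.
Proof. by rewrite /pair_eq orbC. Qed.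

Lemma pair_eq_sym x y s t : pair_eq x y s t = pair_eq x y t s.
Proof. by rewrite /pair_eq orbC andbC [(t == y) && _]andbC. Qed.

Lemma pair_eq_refl x y : pair_eq x y x y.
Proof. by rewrite /pair_eq !eqxx. Qed.

Lemma del_edgeC T x y : del_edge T x y =2 del_edge T y x.
Proof. by move=> s t; rewrite /del_edge /= pair_eqC. Qed.

Lemma del_edge_pair T x y s t : pair_eq x y s t -> del_edge T x y =2 del_edge T s t.
Proof. by case/orP=> /andP[/eqP-> /eqP->] //; apply: del_edgeC. Qed.

Lemma del_edge_sym T x y : symmetric T -> symmetric (del_edge T x y).
Proof. by move=> sT s t; rewrite /del_edge /= sT pair_eq_sym. Qed.

Lemma add_edge_sym T x y : symmetric T -> symmetric (add_edge T x y).
Proof. by move=> sT s t; rewrite /add_edge /= sT pair_eq_sym. Qed.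

Lemma del_edge_sub T x y : subrel (del_edge T x y) T.
Proof. by move=> s t /andP[]. Qed.

Lemma add_edge_sub T x y : subrel T (add_edge T x y).
Proof. by move=> s t Tst; rewrite /add_edge /= Tst. Qed.

Lemma connect_subrel T1 T2 : subrel T1 T2 -> subrel (connect T1) (connect T2).
Proof. by move=> sub12; apply: connect_sub => s t /sub12/connect1. Qed.

Lemma path_del_edge T x y z p :
  x \notin z :: p -> path T z p -> path (del_edge T x y) z p.
Proof.
move=> xp; apply: (sub_in_path (P := predC1 x)) => [s t|].
  by rewrite !inE => sx tx Tst; rewrite /del_edge /= Tst /pair_eq (negPf sx) (negPf tx) andbF.
by apply/allP => w wp; apply: contraNneq xp => <-.
Qed.

Lemma acyclic_bridge T x y :
  symmetric T -> acyclic T -> T x y -> x != y -> ~~ connect (del_edge T x y) x y.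
Proof.
move=> sT aT Txy nxy; apply/negP => /connectP[p pp lp].
move: lp; case: (shortenP pp) => {pp} p pp up _ lp.
have sz : 3 <= size (x :: p).
  case: p pp up lp => [|z [|w q]] //=; first by move=> _ _ yx; rewrite yx eqxx in nxy.
  by rewrite andbT => /andP[_] /[swap] _ /[swap] <-; rewrite pair_eq_refl.
have := aT _ sz up; rewrite /= rcons_path -lp sT Txy andbT.
by rewrite (sub_path (@del_edge_sub T x y) pp).
Qed.

(* Rotating c to start at the removed edge, c = p :: q' :: r :: s with
   {x, y} = {p, q'}, the arc q' r .. s p of the cycle avoids that edge. *)
Lemma cycle_del_edge_connect T x y c : symmetric T -> uniq c -> 2 < size c ->
  cycle T c -> ~~ cycle (del_edge T x y) c -> connect (del_edge T x y) x y.
Proof.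
move=> sT uc sc cT ncD.
have [p pc] : exists2 p, p \in c & ~~ del_edge T x y p (next c p).
  apply/hasP; apply: contraR ncD => /hasPn nD.
  by apply: cycle_from_next uc _ => p /nD; rewrite negbK.
rewrite /del_edge /= (next_cycle cT pc) negbK => xy_pq.
rewrite (eq_connect (del_edge_pair T xy_pq)).
have [i s rot_c] := rot_to pc.
have : uniq (p :: s) /\ cycle T (p :: s) by rewrite -rot_c rot_uniq rot_cycle.
have : next (p :: s) p = next c p by rewrite -rot_c next_rot.
have : 2 < size (p :: s) by rewrite -rot_c size_rot.
move: xy_pq; case: s {rot_c} => [|q' [|r s]] //= + _; rewrite eqxx => /[swap] <- xy_pq.
case=> /and4P[p_qrs q_rs _ _] /and3P[_ Tqr]; rewrite rcons_path => /andP[Trs Tsp].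
have cqp : connect (del_edge T p q') q' p.
  apply: connect_trans (_ : connect _ q' (last r s)) (connect1 _).
    apply/(path_connect (p := r :: s)); last by rewrite inE mem_last orbT.
    by apply: path_del_edge; rewrite //= Tqr.
  rewrite /del_edge /= Tsp /pair_eq negb_or !negb_and.
  have /negPf-> : last r s != q' by apply: contraNneq q_rs => <-; apply: mem_last.
  by move: p_qrs; rewrite inE => /norP[-> _]; rewrite orbT.
have sD := sym_connect_sym (del_edge_sym p q' sT).
by case/orP: xy_pq => /andP[/eqP<- /eqP<-]; rewrite // sD.
Qed.

Lemma path_exit_edge T (C : pred V) z p :
  path T z p -> uniq (z :: p) -> C z -> ~~ C (last z p) ->
  exists a b, [/\ C a, ~~ C b, T a b, connect (del_edge T a b) z a
                & connect (del_edge T a b) b (last z p)].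
Proof.
elim: p z => [|y p IH] z /=; first by move=> _ _ ->.
case/andP=> Tzy pp /andP[zp up] Cz Cl.
have [Cy | nCy] := boolP (C y).
  have [a [b [Ca nCb Tab cya cbl]]] := IH y pp up Cy Cl.
  exists a, b; split=> //; apply: connect_trans cya; apply: connect1.
  have /negPf zb : z != b by apply: contraNneq nCb => <-.
  have /negPf yb : y != b by apply: contraNneq nCb => <-.
  by rewrite /del_edge /= Tzy /pair_eq zb yb andbF.
exists z, y; split=> //; apply/(path_connect (p := p)); last exact: mem_last.
by apply: path_del_edge; rewrite // inE negb_or zp andbT; apply: contraNneq nCy => <-.
Qed.

Lemma subset_set2 e x y : ([set x; y] \subset e) = (x \in e) && (y \in e).
Proof. by rewrite subUset !sub1set. Qed.

Lemma induced_sub T e : subrel (induced T e) T.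
Proof. by move=> s t /and3P[]. Qed.

Lemma sub_induced T1 T2 e : subrel T1 T2 -> subrel (induced T1 e) (induced T2 e).
Proof. by move=> sub12 s t /and3P[se te /sub12 T2st]; rewrite /induced /= se te. Qed.

Lemma induced_sym T e : symmetric T -> symmetric (induced T e).
Proof. by move=> sT s t; rewrite /induced /= sT andbCA. Qed.

Lemma induces_connected_sub T1 T2 e :
  subrel T1 T2 -> induces_connected T1 e -> induces_connected T2 e.
Proof.
by move=> sub12 cT1 s t se te; apply: connect_subrel (sub_induced sub12) _ _ (cT1 s t se te).
Qed.

Lemma induced_del_edge T x y e :
  induced (del_edge T x y) e =2 del_edge (induced T e) x y.
Proof. by move=> s t; rewrite /induced /del_edge /= !andbA. Qed.

Lemma induced_del_edge_out T x y e :
  ~~ ([set x; y] \subset e) -> induced (del_edge T x y) e =2 induced T e.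
Proof.
move=> xy_e s t; rewrite induced_del_edge /del_edge /induced /=.
have [/and3P[se te _] /=|] := boolP [&& _, _ & _]; last by [].
apply: contraNN xy_e; rewrite subset_set2.
by case/orP=> /andP[/eqP<- /eqP<-]; rewrite se te.
Qed.

Lemma induces_connected_del_edge T x y e : ~~ ([set x; y] \subset e) ->
  induces_connected T e -> induces_connected (del_edge T x y) e.
Proof.
by move=> xy_e cT s t se te; rewrite (eq_connect (induced_del_edge_out T xy_e)) cT.
Qed.

Lemma induces_connected_del_edge_split T x y e w : x != y ->
  induces_connected T e -> x \in e -> w \in e ->
  connect (induced (del_edge T x y) e) x w || connect (induced (del_edge T x y) e) y w.
Proof.
move=> nxy cT xe we; rewrite !(eq_connect (induced_del_edge T x y e)).
have /connectP[p0 pp0 ->] := cT x w xe we.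
case: (shortenP pp0) => {pp0} p pp up _.
have [yp | nyp] := boolP (y \in p).
  apply/orP; right; case/splitPr: yp pp up => p1 p2.
  rewrite cat_path last_cat /= => /and3P[_ _ pp2].
  rewrite mem_cat negb_or => /andP[/andP[_ xp2] _].
  apply: (path_connect (p := p2)); last exact: mem_last.
  exact: path_del_edge.
apply/orP; left; rewrite (eq_connect (del_edgeC _ x y)).
apply: (path_connect (p := p)); last exact: mem_last.
by apply: path_del_edge => //; rewrite inE negb_or eq_sym nxy.
Qed.

Lemma two_section_connect_mem (F : {set {set V}}) e s t :
  e \in F -> s \in e -> t \in e -> connect (two_section F) s t.
Proof.
move=> eF se te; have [<-|nst] := eqVneq s t; first exact: connect0.
by apply: connect1; rewrite /two_section /= nst; apply/exists_inP; exists e; rewrite ?se.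
Qed.

Lemma connect_two_section T (F : {set {set V}}) :
  (forall e, e \in F -> induces_connected T e) ->
  subrel (connect (two_section F)) (connect T).
Proof.
move=> cF; apply: connect_sub => s t /andP[_ /exists_inP[e eF /andP[se te]]].
exact: connect_subrel (@induced_sub T e) _ _ (cF e eF s t se te).
Qed.

End EdgeSurgery.

Section EdgeSwap.
Variables (V : finType) (T : rel V) (a b u v : V).
Implicit Type e : {set V}.
Hypotheses (treeT : is_tree T) (Tab : T a b).
Hypotheses (cua : connect (del_edge T a b) u a) (cbv : connect (del_edge T a b) b v).

Local Notation T' := (add_edge (del_edge T a b) u v).

Let sT : symmetric T. Proof. by case: treeT => -[]. Qed.

Let sD : connect_sym (del_edge T a b).
Proof. exact/sym_connect_sym/del_edge_sym/sT. Qed.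

Let cau : connect (del_edge T a b) a u. Proof. by rewrite sD. Qed.

Let sT' : symmetric T'. Proof. exact/add_edge_sym/del_edge_sym. Qed.

Let a_neq_b : a != b.
Proof. by case: treeT => -[_ iT] _ _; apply: contraTneq Tab => ->; rewrite iT. Qed.

Let bridge_ab : ~~ connect (del_edge T a b) a b.
Proof. by case: treeT => -[_ _] _ aT; apply: acyclic_bridge. Qed.

Let u_neq_v : u != v.
Proof.
apply: contraNneq bridge_ab => uv.
by apply: connect_trans cau _; rewrite uv sD.
Qed.

Let connect_swap_ab : connect T' a b.
Proof.
have sub := connect_subrel (@add_edge_sub _ (del_edge T a b) u v).
apply: connect_trans (sub _ _ cau) (connect_trans (connect1 (_ : T' u v)) _).
  by rewrite /add_edge /= pair_eq_refl orbT.
by apply: sub; rewrite sD.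
Qed.

Lemma swap_edge_tree : is_tree T'.
Proof.
case: treeT => -[_ iT] cT aT.
split; first split=> // x.
- rewrite /add_edge /del_edge /= iT /pair_eq.
  by case: (x =P u) => [->|_]; rewrite ?eqxx ?(negPf u_neq_v) ?andbF.
- move=> x y; apply: connect_sub (cT x y) => s t Tst.
  have [ab_st|nab] := boolP (pair_eq a b s t).
    by case/orP: ab_st => /andP[/eqP-> /eqP->]; rewrite ?(sym_connect_sym sT' b) connect_swap_ab.
  by apply: connect1; rewrite /add_edge /del_edge /= Tst nab.
move=> c sc uc; apply/negP => cT'c.
have [cD|ncD] := boolP (cycle (del_edge T a b) c).
  by have := aT c sc uc; rewrite (sub_cycle (@del_edge_sub _ T a b) cD).
have sub : subrel (del_edge T' u v) (del_edge T a b).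
  by move=> s t /andP[/orP[] // uv_st]; rewrite uv_st.
have := cycle_del_edge_connect sT' uc sc cT'c (contra (@sub_cycle _ _ _ sub c) ncD).
move/(connect_subrel sub) => cuv; apply: (negP bridge_ab).
by apply: connect_trans cau (connect_trans cuv _); rewrite sD.
Qed.

Lemma induces_connected_swap_off e : ~~ ([set a; b] \subset e) ->
  induces_connected T e -> induces_connected T' e.
Proof.
move=> ab_e cT; apply: induces_connected_sub (@add_edge_sub _ _ u v) _.
exact: induces_connected_del_edge.
Qed.

Lemma induces_connected_swap_on e : u \in e -> v \in e ->
  induces_connected T e -> induces_connected T' e.
Proof.
move=> ue ve cT; have [ab_e|] := boolP ([set a; b] \subset e); last first.
  by move=> ab_e; apply: induces_connected_swap_off.
rewrite subset_set2 in ab_e; case/andP: ab_e => ae be.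
have iD : induced (del_edge T b a) e =2 induced (del_edge T a b) e.
  by move=> s t; rewrite /induced /= del_edgeC.
have to_T' := connect_subrel (sub_induced (e := e) (@add_edge_sub _ (del_edge T a b) u v)).
have to_D := connect_subrel (@induced_sub _ (del_edge T a b) e).
have au : connect (induced T' e) a u.
  apply: to_T'; have /orP[//|/to_D cbu] := induces_connected_del_edge_split a_neq_b cT ae ue.
  by case/negP: bridge_ab; apply: connect_trans cau _; rewrite sD.
have bv : connect (induced T' e) b v.
  apply: to_T'; rewrite -(eq_connect iD).
  have b_neq_a : b != a by rewrite eq_sym.
  have /orP[//|] := induces_connected_del_edge_split b_neq_a cT be ve.
  rewrite (eq_connect iD) => /to_D cav.
  by case/negP: bridge_ab; apply: connect_trans cav _; rewrite sD.
have sI := sym_connect_sym (induced_sym e sT').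
have cab : connect (induced T' e) a b.
  apply: connect_trans au (connect_trans (connect1 (_ : induced T' e u v)) _).
    by rewrite /induced /= ue ve /add_edge /= pair_eq_refl orbT.
  by rewrite sI.
move=> x y xe ye; apply: connect_sub (cT x y xe ye) => s t /and3P[se te Tst].
have [ab_st|nab] := boolP (pair_eq a b s t).
  by case/orP: ab_st => /andP[/eqP-> /eqP->]; rewrite ?(sI b) cab.
by apply: connect1; rewrite /induced /= se te /add_edge /del_edge /= Tst nab.
Qed.

End EdgeSwap.

Section HostTreeEdge.
Variables (V : finType) (E : {set {set V}}) (u v : V).

Local Notation G := (two_section (Hbar E [set u; v])).

Lemma host_tree_edge_separates T : host_tree E T -> T u v -> ~~ connect G u v.
Proof.
case=> -[[sT iT] _ aT] hT Tuv.
have u_neq_v : u != v by apply: contraTneq Tuv => ->; rewrite iT.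
apply: contra (acyclic_bridge sT aT Tuv u_neq_v).
apply: connect_two_section => e; rewrite inE => /andP[eE uv_e].
exact: induces_connected_del_edge (hT e eE).
Qed.

Lemma host_tree_exchange T : host_tree E T -> ~~ connect G u v ->
  exists T' : rel V, host_tree E T' /\ T' u v.
Proof.
case=> treeT hT uv_disc.
have /connectP[p0 pp0] : connect T u v by case: treeT.
case: (shortenP pp0) => {pp0} p pp up _ lp.
have last_disc : ~~ connect G u (last u p) by rewrite -lp.
have [a [b [ua ubN Tab cua]]] := path_exit_edge pp up (connect0 G u) last_disc.
rewrite -lp => cbv.
exists (add_edge (del_edge T a b) u v); split; last by rewrite /add_edge /= pair_eq_refl orbT.
split=> [|e eE]; first exact: swap_edge_tree.
have [uv_e|uv_e] := boolP ([set u; v] \subset e).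
  rewrite subset_set2 in uv_e; case/andP: uv_e => ue ve.
  exact: induces_connected_swap_on treeT Tab cua cbv _ ue ve (hT e eE).
apply: induces_connected_swap_off (hT e eE) => //; apply: contra ubN.
rewrite subset_set2 => /andP[ae be]; apply: connect_trans ua _.
by apply: (@two_section_connect_mem _ _ e); rewrite // inE eE uv_e.
Qed.

End HostTreeEdge.

Theorem mainTheorem10 (V : finType) (E : {set {set V}})
  (HE : forall e, e \in E -> e != set0)
  (Htree : hypertree E) (u v : V) :
  (exists T : rel V, host_tree E T /\ T u v) <->
  ~~ connect (two_section (Hbar E [set u; v])) u v.
Proof.
split=> [[T [hostT Tuv]] | uv_disc]; first exact: host_tree_edge_separates hostT Tuv.
by case: Htree => T hostT; apply: host_tree_exchange hostT uv_disc.
Qed.
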